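(* Let $\mathcal{C}$ be a Cartesian closed category equipped with a comonad $\Box$ that has a left adjoint $\mathsf{lock} \dashv \Box$; then equivalent terms $t$ and $u$ of type $A$ in context $\Gamma$ of the calculus $\mathrm{IS4}_C$ denote equal morphisms in $\mathcal{C}$.
   Context: $\mathrm{IS4}_C$ is the Fitch-style calculus with types $A ::= \iota \mid A \to B \mid \Box A$ and contexts $\Gamma ::= \cdot \mid \Gamma, A \mid \Gamma, \mathsf{lock}$ ($\mathsf{lock}$ the lock operator). The relation $\Delta \mathrel{R} \Gamma$ holds when $\Gamma$ extends $\Delta$ on the right by any number of types and locks (it is reflexive and transitive). Terms are those of STLC plus $\mathsf{box}\, t : \Box A$ in $\Gamma$ from $t : A$ in $\Gamma, \mathsf{lock}$, and $\mathsf{unbox}(t, e) : A$ in $\Gamma$ from $t : \Box A$ in $\Delta$ and an explicit proof $e : \Delta \mathrel{R} \Gamma$. The equational theory contains $\beta$/$\eta$ for functions, $\mathsf{unbox}(\mathsf{box}\, t, e) \equiv t[(\mathrm{id}, e)]$ (substituting the lock using $e$), and $t \equiv \mathsf{box}(\mathsf{unbox}(t, e_1))$ where $e_1 : \Gamma \mathrel{R} \Gamma, \mathsf{lock}$ adds one lock. Terms are interpreted in $\mathcal{C}$ by interpreting $\Box$ and $\mathsf{lock}$ as the right and left adjoint and $\mathsf{box}$/$\mathsf{unbox}$ via the adjuncts (Clouston's categorical semantics). *)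

Set Implicit Arguments.
Unset Strict Implicit.

Record Category := {
  ob :> Type;
  hom : ob -> ob -> Type;
  idm : forall a, hom a a;
  comp : forall a b c, hom b c -> hom a b -> hom a c;
  comp_id_l : forall a b (f : hom a b), comp (idm b) f = f;
  comp_id_r : forall a b (f : hom a b), comp f (idm a) = f;
  comp_assoc : forall a b c d (h : hom c d) (g : hom b c) (f : hom a b),
      comp h (comp g f) = comp (comp h g) f }.

Arguments idm {_} _.
Arguments comp {_ _ _ _} _ _.

Record CartesianClosed (C : Category) := {
  term : ob C;
  bang : forall a : ob C, @hom C a term;
  bang_unique : forall a (f : @hom C a term), f = bang a;
  prod : ob C -> ob C -> ob C;
  p1 : forall a b, @hom C (prod a b) a;
  p2 : forall a b, @hom C (prod a b) b;
  pair : forall c a b, @hom C c a -> @hom C c b -> @hom C c (prod a b);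
  pair_p1 : forall c a b (f : @hom C c a) (g : @hom C c b), comp (p1 a b) (pair f g) = f;
  pair_p2 : forall c a b (f : @hom C c a) (g : @hom C c b), comp (p2 a b) (pair f g) = g;
  pair_unique : forall c a b (h : @hom C c (prod a b)),
      pair (comp (p1 a b) h) (comp (p2 a b) h) = h;
  exp : ob C -> ob C -> ob C;   (* exp a b = b^a *)
  ev : forall a b, @hom C (prod (exp a b) a) b;
  cur : forall c a b, @hom C (prod c a) b -> @hom C c (exp a b);
  cur_beta : forall c a b (f : @hom C (prod c a) b),
      comp (ev a b) (pair (comp (cur f) (p1 c a)) (p2 c a)) = f;
  cur_unique : forall c a b (f : @hom C (prod c a) b) (g : @hom C c (exp a b)),
      comp (ev a b) (pair (comp g (p1 c a)) (p2 c a)) = f -> g = cur f }.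

Arguments term {_} _.
Arguments bang {_} _ _.
Arguments prod {_} _ _ _.
Arguments p1 {_} _ {_ _}.
Arguments p2 {_} _ {_ _}.
Arguments pair {_} _ {_ _ _} _ _.
Arguments exp {_} _ _ _.
Arguments ev {_} _ {_ _}.
Arguments cur {_} _ {_ _ _} _.

Record Functor (C : Category) := {
  fobj :> ob C -> ob C;
  fmap : forall a b, @hom C a b -> @hom C (fobj a) (fobj b);
  fmap_id : forall a, fmap (idm a) = idm (fobj a);
  fmap_comp : forall a b c (g : @hom C b c) (f : @hom C a b),
      fmap (comp g f) = comp (fmap g) (fmap f) }.

Arguments fmap {_} _ {_ _} _.

Record Comonad (C : Category) (F : Functor C) := {
  cm_counit : forall a, @hom C (F a) a;
  cm_comult : forall a, @hom C (F a) (F (F a));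
  cm_counit_nat : forall a b (f : @hom C a b),
      comp f (cm_counit a) = comp (cm_counit b) (fmap F f);
  cm_comult_nat : forall a b (f : @hom C a b),
      comp (fmap F (fmap F f)) (cm_comult a) = comp (cm_comult b) (fmap F f);
  cm_law1 : forall a, comp (cm_counit (F a)) (cm_comult a) = idm (F a);
  cm_law2 : forall a, comp (fmap F (cm_counit a)) (cm_comult a) = idm (F a);
  cm_law3 : forall a, comp (cm_comult (F a)) (cm_comult a)
                      = comp (fmap F (cm_comult a)) (cm_comult a) }.

Arguments cm_counit {_ _} _ _.
Arguments cm_comult {_ _} _ _.

Record Adjunction (C : Category) (L R : Functor C) := {
  adj_unit : forall a, @hom C a (R (L a));
  adj_counit : forall a, @hom C (L (R a)) a;
  adj_unit_nat : forall a b (f : @hom C a b),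
      comp (fmap R (fmap L f)) (adj_unit a) = comp (adj_unit b) f;
  adj_counit_nat : forall a b (f : @hom C a b),
      comp f (adj_counit a) = comp (adj_counit b) (fmap L (fmap R f));
  adj_tri_L : forall a, comp (adj_counit (L a)) (fmap L (adj_unit a)) = idm (L a);
  adj_tri_R : forall a, comp (fmap R (adj_counit a)) (adj_unit (R a)) = idm (R a) }.

Arguments adj_unit {_ _ _} _ _.
Arguments adj_counit {_ _ _} _ _.

Record ModalCCC := {
  mc_cat :> Category;
  mc_ccc : CartesianClosed mc_cat;
  mc_box : Functor mc_cat;
  mc_comonad : Comonad mc_box;
  mc_lock : Functor mc_cat;
  mc_adj : Adjunction mc_lock mc_box }.

Inductive Ty : Type :=
| iota : Ty
| arr : Ty -> Ty -> Ty
| bx : Ty -> Ty.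

Inductive Ctx : Type :=
| cnil : Ctx
| cext : Ctx -> Ty -> Ctx
| clock : Ctx -> Ctx.

(* Variables: no variable may be accessed across a lock. *)
Inductive Var : Ctx -> Ty -> Type :=
| ze : forall G A, Var (cext G A) A
| su : forall G A B, Var G A -> Var (cext G B) A.

(* Ext D G : proofs of D R G, G extends D on the right by types and locks. *)
Inductive Ext (D : Ctx) : Ctx -> Type :=
| ext_nil : Ext D D
| ext_snoc : forall G A, Ext D G -> Ext D (cext G A)
| ext_lock : forall G, Ext D G -> Ext D (clock G).

Arguments ext_nil {D}.
Arguments ext_snoc {D G} A e.
Arguments ext_lock {D G} e.

Inductive Tm : Ctx -> Ty -> Type :=
| var : forall G A, Var G A -> Tm G A
| lam : forall G A B, Tm (cext G A) B -> Tm G (arr A B)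
| app : forall G A B, Tm G (arr A B) -> Tm G A -> Tm G B
| box : forall G A, Tm (clock G) A -> Tm G (bx A)
| unbox : forall D G A, Tm D (bx A) -> Ext D G -> Tm G A.

Fixpoint ext_trans D G H (e1 : Ext D G) (e2 : Ext G H) {struct e2} : Ext D H :=
  match e2 in Ext _ H return Ext D H with
  | ext_nil => e1
  | ext_snoc A e => ext_snoc A (ext_trans e1 e)
  | ext_lock e => ext_lock (ext_trans e1 e)
  end.

(* Generic substitutions Sub_T G D : assign to every entry of D something in G.
   A lock of D is mapped to a lock of some G0 with G0 R G. *)
Fixpoint SubK (T : Ctx -> Ty -> Type) (G D : Ctx) {struct D} : Type :=
  match D with
  | cnil => unit
  | cext D A => (SubK T G D * T G A)%type
  | clock D => { G0 : Ctx & (SubK T G0 D * Ext G0 G)%type }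
  end.

Definition Ren := SubK Var.
Definition Sub := SubK Tm.

Fixpoint factor (T : Ctx -> Ty -> Type) D G (e : Ext D G) {struct e}
  : forall G', SubK T G' G -> { D' : Ctx & (SubK T D' D * Ext D' G')%type } :=
  match e in Ext _ G return forall G', SubK T G' G ->
          { D' : Ctx & (SubK T D' D * Ext D' G')%type } with
  | ext_nil => fun G' s => existT _ G' (s, ext_nil)
  | ext_snoc _ e => fun G' s => factor e (fst s)
  | ext_lock e => fun G' s =>
      match s with
      | existT _ G0 (s0, e0) =>
          match factor e s0 with
          | existT _ D' (s', e') => existT _ D' (s', ext_trans e' e0)
          end
      end
  end.

Fixpoint wkK (T : Ctx -> Ty -> Type) (w : forall G A B, T G A -> T (cext G B) A)
  G B D {struct D} : SubK T G D -> SubK T (cext G B) D :=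
  match D return SubK T G D -> SubK T (cext G B) D with
  | cnil => fun _ => tt
  | cext D A => fun s => (wkK w B (fst s), w _ _ B (snd s))
  | clock D => fun s =>
      match s with existT _ G0 (s0, e0) => existT _ G0 (s0, ext_snoc B e0) end
  end.

Fixpoint lookupK (T : Ctx -> Ty -> Type) G D A (x : Var D A) {struct x}
  : SubK T G D -> T G A :=
  match x in Var D A return SubK T G D -> T G A with
  | ze _ _ => fun s => snd s
  | su _ x => fun s => lookupK x (fst s)
  end.

Fixpoint idRen (G : Ctx) : Ren G G :=
  match G return Ren G G with
  | cnil => tt
  | cext G A => (wkK (@su) A (idRen G), ze G A)
  | clock G => existT _ G (idRen G, ext_lock ext_nil)
  end.

Fixpoint ren D A (t : Tm D A) {struct t} : forall G, Ren G D -> Tm G A :=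
  match t in Tm D A return forall G, Ren G D -> Tm G A with
  | var x => fun G r => var (lookupK x r)
  | @lam _ A0 _ t => fun G r => lam (@ren _ _ t (cext G A0) (wkK (@su) A0 r, ze G A0))
  | app t u => fun G r => app (@ren _ _ t G r) (@ren _ _ u G r)
  | box t => fun G r =>
      box (@ren _ _ t (clock G) (existT _ G (r, ext_lock ext_nil)))
  | unbox t e => fun G r =>
      match factor e r with
      | existT _ D' (r', e') => unbox (@ren _ _ t D' r') e'
      end
  end.
Arguments ren {D A} t G r.

Definition wkTm G A B (t : Tm G A) : Tm (cext G B) A :=
  ren t (cext G B) (wkK (@su) B (idRen G)).

Fixpoint idSub (G : Ctx) : Sub G G :=
  match G return Sub G G with
  | cnil => tt
  | cext G A => (wkK (@wkTm) A (idSub G), var (ze G A))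
  | clock G => existT _ G (idSub G, ext_lock ext_nil)
  end.

Fixpoint sub D A (t : Tm D A) {struct t} : forall G, Sub G D -> Tm G A :=
  match t in Tm D A return forall G, Sub G D -> Tm G A with
  | var x => fun G s => lookupK x s
  | @lam _ A0 _ t => fun G s =>
      lam (@sub _ _ t (cext G A0) (wkK (@wkTm) A0 s, var (ze G A0)))
  | app t u => fun G s => app (@sub _ _ t G s) (@sub _ _ u G s)
  | box t => fun G s =>
      box (@sub _ _ t (clock G) (existT _ G (s, ext_lock ext_nil)))
  | unbox t e => fun G s =>
      match factor e s with
      | existT _ D' (s', e') => unbox (@sub _ _ t D' s') e'
      end
  end.
Arguments sub {D A} t G s.

Definition lockSub D G (e : Ext D G) : Sub G (clock D) :=
  existT (fun G0 => (Sub G0 D * Ext G0 G)%type) D (idSub D, e).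

Inductive conv : forall G A, Tm G A -> Tm G A -> Prop :=
| conv_refl : forall G A (t : Tm G A), conv t t
| conv_sym : forall G A (t u : Tm G A), conv t u -> conv u t
| conv_trans : forall G A (t u v : Tm G A), conv t u -> conv u v -> conv t v
| conv_lam : forall G A B (t t' : Tm (cext G A) B), conv t t' -> conv (lam t) (lam t')
| conv_app : forall G A B (t t' : Tm G (arr A B)) (u u' : Tm G A),
    conv t t' -> conv u u' -> conv (app t u) (app t' u')
| conv_box : forall G A (t t' : Tm (clock G) A), conv t t' -> conv (box t) (box t')
| conv_unbox : forall D G A (t t' : Tm D (bx A)) (e : Ext D G),
    conv t t' -> conv (unbox t e) (unbox t' e)
| conv_arr_beta : forall G A B (t : Tm (cext G A) B) (u : Tm G A),
    conv (app (lam t) u) (sub t G (idSub G, u))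
| conv_arr_eta : forall G A B (t : Tm G (arr A B)),
    conv t (lam (app (wkTm A t) (var (ze G A))))
| conv_box_beta : forall D G A (t : Tm (clock D) A) (e : Ext D G),
    conv (unbox (box t) e) (sub t G (lockSub e))
| conv_box_eta : forall G A (t : Tm G (bx A)),
    conv t (box (unbox t (ext_lock ext_nil))).

Section Interp.
Variable M : ModalCCC.
Variable base : ob M.

Let CC := mc_ccc M.
Let Bx := mc_box M.
Let Lk := mc_lock M.
Let W := mc_comonad M.
Let Adj := mc_adj M.

Fixpoint ity (A : Ty) : ob M :=
  match A with
  | iota => base
  | arr A B => exp CC (ity A) (ity B)
  | bx A => Bx (ity A)
  end.

Fixpoint ictx (G : Ctx) : ob M :=
  match G with
  | cnil => term CC
  | cext G A => prod CC (ictx G) (ity A)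
  | clock G => Lk (ictx G)
  end.

Fixpoint ivar G A (x : Var G A) : @hom M (ictx G) (ity A) :=
  match x in Var G A return @hom M (ictx G) (ity A) with
  | ze _ _ => p2 CC
  | su _ x => comp (ivar x) (p1 CC)
  end.

Definition transp_inv (X Y : ob M) (f : @hom M X (Bx Y)) : @hom M (Lk X) Y :=
  comp (adj_counit Adj Y) (fmap Lk f).

(* the monad structure on Lk induced by the comonad Bx and the adjunction *)
Definition etaL (X : ob M) : @hom M X (Lk X) :=
  comp (cm_counit W (Lk X)) (adj_unit Adj X).

Definition muL (X : ob M) : @hom M (Lk (Lk X)) (Lk X) :=
  transp_inv (transp_inv (comp (cm_comult W (Lk X)) (adj_unit Adj X))).

Fixpoint iext D G (e : Ext D G) : @hom M (ictx G) (Lk (ictx D)) :=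
  match e in Ext _ G return @hom M (ictx G) (Lk (ictx D)) with
  | ext_nil => etaL (ictx D)
  | ext_snoc _ e => comp (iext e) (p1 CC)
  | ext_lock e => comp (muL (ictx D)) (fmap Lk (iext e))
  end.

Fixpoint itm G A (t : Tm G A) : @hom M (ictx G) (ity A) :=
  match t in Tm G A return @hom M (ictx G) (ity A) with
  | var x => ivar x
  | lam t => cur CC (itm t)
  | app t u => comp (ev CC) (pair CC (itm t) (itm u))
  | @box G _ t => comp (fmap Bx (itm t)) (adj_unit Adj (ictx G))
  | @unbox _ _ A t e => comp (adj_counit Adj (ity A)) (comp (fmap Lk (itm t)) (iext e))
  end.

End Interp.

(* The lock functor, being left adjoint to the comonad Box, inherits the mate
   monad structure (etaL, muL); an extension D R G denotes a Kleisli arrow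
   [[G]] -> Lk [[D]], and concatenation of extensions is Kleisli composition.
   Interpreting substitutions as morphisms between contexts, the monad laws give
   the substitution lemma [[t[s]]] = [[t]] o [[s]].  The beta and eta laws then
   reduce to the universal property of exponentials and to the fact that
   transposition along Lk -| Box is a bijection. *)

From Stdlib Require Import Setoid.

Local Notation "g ∘ f" := (comp g f) (at level 40, left associativity).

Lemma comp_eq_assoc {C : Category} {a b c d : C} {g : hom b c} {f : hom a b}
  {h : hom a c} : g ∘ f = h -> forall k : hom d a, g ∘ (f ∘ k) = h ∘ k.
Proof. intros E k. rewrite comp_assoc, E. reflexivity. Qed.

(* Composites are kept right-associated, so that an equation [g ∘ f = h] can be
   used to rewrite any [g ∘ (f ∘ k)]. *)
Ltac assoc_r :=
  repeat rewrite <- comp_assoc; repeat rewrite comp_id_l; repeat rewrite comp_id_r.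
Tactic Notation "crewrite" uconstr(E) :=
  assoc_r; first [rewrite (comp_eq_assoc E) | rewrite E]; assoc_r.
Tactic Notation "crewrite" "<-" uconstr(E) :=
  assoc_r; first [rewrite (comp_eq_assoc (eq_sym E)) | rewrite <- E]; assoc_r.

Section CartesianClosed.
Variables (C : Category) (CC : CartesianClosed C).

Lemma pair_comp {X Y Z W : C} (f : hom Y Z) (g : hom Y W) (h : hom X Y) :
  pair CC f g ∘ h = pair CC (f ∘ h) (g ∘ h).
Proof.
  rewrite <- (pair_unique (pair CC f g ∘ h)).
  rewrite !comp_assoc, pair_p1, pair_p2. reflexivity.
Qed.

Lemma pair_p1_p2 {X Y : C} : pair CC (p1 CC) (p2 CC) = idm (prod CC X Y).
Proof. rewrite <- (pair_unique (idm _)), !comp_id_r. reflexivity. Qed.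

Lemma cur_comp {X Y Z W : C} (f : hom (prod CC Y Z) W) (g : hom X Y) :
  cur CC f ∘ g = cur CC (f ∘ pair CC (g ∘ p1 CC) (p2 CC)).
Proof.
  apply cur_unique. rewrite <- (cur_beta f) at 2. assoc_r.
  rewrite pair_comp. assoc_r. rewrite pair_p1, pair_p2. reflexivity.
Qed.

Lemma ev_pair_cur {X Y Z : C} (f : hom (prod CC X Y) Z) (g : hom X Y) :
  ev CC ∘ pair CC (cur CC f) g = f ∘ pair CC (idm X) g.
Proof.
  rewrite <- (cur_beta f) at 2. assoc_r.
  rewrite pair_comp. assoc_r. rewrite pair_p1, pair_p2, comp_id_r. reflexivity.
Qed.

End CartesianClosed.

Section LockMonad.
Variable M : ModalCCC.
Local Notation L := (mc_lock M).
Local Notation R := (mc_box M).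
Local Notation unit := (adj_unit (mc_adj M)).
Local Notation Adj := (mc_adj M).
Local Notation W := (mc_comonad M).

Definition transp {X Y : M} (h : hom (L X) Y) : hom X (R Y) := fmap R h ∘ unit X.

Lemma comp_transp_inv {X Y Z : M} (g : hom Y Z) (h : hom X (R Y)) :
  g ∘ transp_inv h = transp_inv (fmap R g ∘ h).
Proof.
  unfold transp_inv. crewrite (adj_counit_nat Adj _). rewrite fmap_comp. reflexivity.
Qed.

Lemma transp_inv_fmap {X X' Y : M} (h : hom X (R Y)) (k : hom X' X) :
  transp_inv h ∘ fmap L k = transp_inv (h ∘ k).
Proof. unfold transp_inv. rewrite fmap_comp. assoc_r. reflexivity. Qed.

Lemma transp_inv_unit (X : M) : transp_inv (unit X) = idm (L X).
Proof. apply adj_tri_L. Qed.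

Lemma transp_invK {X Y : M} (h : hom X (R Y)) : transp (transp_inv h) = h.
Proof.
  unfold transp, transp_inv. rewrite fmap_comp.
  crewrite (adj_unit_nat Adj _). crewrite (adj_tri_R Adj _). reflexivity.
Qed.

Lemma transpK {X Y : M} (h : hom (L X) Y) : transp_inv (transp h) = h.
Proof.
  unfold transp. rewrite <- comp_transp_inv, transp_inv_unit, comp_id_r.
  reflexivity.
Qed.

Lemma transp_fmap {X X' Y : M} (h : hom (L X) Y) (k : hom X' X) :
  transp (h ∘ fmap L k) = transp h ∘ k.
Proof.
  unfold transp. rewrite fmap_comp. crewrite (adj_unit_nat Adj _). reflexivity.
Qed.

Lemma etaL_natural {X Y : M} (f : hom X Y) : fmap L f ∘ etaL X = etaL Y ∘ f.
Proof.
  unfold etaL. crewrite (cm_counit_nat W _). crewrite (adj_unit_nat Adj _).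
  reflexivity.
Qed.

Lemma muL_natural {X Y : M} (f : hom X Y) :
  fmap L f ∘ muL X = muL Y ∘ fmap L (fmap L f).
Proof.
  unfold muL. rewrite comp_transp_inv, transp_inv_fmap. f_equal.
  rewrite comp_transp_inv, transp_inv_fmap. f_equal.
  crewrite (cm_comult_nat W _). crewrite (adj_unit_nat Adj _). reflexivity.
Qed.

Lemma muL_etaL (X : M) : muL X ∘ etaL (L X) = idm (L X).
Proof.
  unfold etaL. crewrite (cm_counit_nat W _). unfold muL at 1.
  change (fmap R ?h ∘ unit ?X) with (transp h). rewrite transp_invK.
  unfold transp_inv. crewrite (adj_counit_nat Adj _). rewrite <- fmap_comp.
  crewrite (cm_law2 W _). apply adj_tri_L.
Qed.

Lemma muL_fmap_etaL (X : M) : muL X ∘ fmap L (etaL X) = idm (L X).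
Proof.
  unfold muL. rewrite transp_inv_fmap, <- transp_inv_unit. f_equal.
  unfold transp_inv at 1, etaL. rewrite fmap_comp. assoc_r.
  do 3 crewrite (cm_counit_nat W _). do 2 crewrite (adj_unit_nat Adj _).
  crewrite (adj_tri_R Adj _). crewrite (cm_law1 W _). reflexivity.
Qed.

Lemma muL_assoc (X : M) : muL X ∘ fmap L (muL X) = muL X ∘ muL (L X).
Proof.
  set (T := transp_inv (cm_comult W (L X) ∘ unit X)).
  assert (coassoc : fmap R T ∘ T = cm_comult W (L X) ∘ T).
  { unfold T at 2 3. rewrite !comp_transp_inv. f_equal.
    crewrite (cm_comult_nat W _). unfold T.
    change (fmap R ?h ∘ unit ?X) with (transp h). rewrite transp_invK.
    crewrite (cm_law3 W _). reflexivity. }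
  assert (T_muL : T ∘ muL X
                  = fmap R (transp_inv T) ∘ transp_inv (cm_comult W (L (L X)) ∘ unit (L X))).
  { unfold muL. fold T. rewrite !comp_transp_inv. f_equal.
    crewrite (cm_comult_nat W _).
    change (fmap R ?h ∘ unit ?X) with (transp h). rewrite transp_invK.
    assoc_r. exact coassoc. }
  unfold muL at 1 3. fold T.
  rewrite transp_inv_fmap, T_muL, <- comp_transp_inv. reflexivity.
Qed.

End LockMonad.

Arguments transp {M X Y} h.

Section Soundness.
Variables (M : ModalCCC) (base : ob M).
Local Notation L := (mc_lock M).
Local Notation CC := (mc_ccc M).
Local Notation iext := (iext base).
Local Notation IV := (@ivar M base).
Local Notation IT := (@itm M base).

Lemma iext_ext_trans {D G H} (e1 : Ext D G) (e2 : Ext G H) :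
  iext (ext_trans e1 e2) = muL _ ∘ fmap L (iext e1) ∘ iext e2.
Proof.
  induction e2; simpl.
  - assoc_r. rewrite etaL_natural. crewrite (muL_etaL _ _). reflexivity.
  - rewrite IHe2. assoc_r. reflexivity.
  - rewrite IHe2, !fmap_comp. assoc_r.
    crewrite (muL_assoc _ _). crewrite (muL_natural _ _). reflexivity.
Qed.

Lemma iext_lock_nil G : iext (@ext_lock G G ext_nil) = idm _.
Proof. apply muL_fmap_etaL. Qed.

Section SubstitutionKit.
Context {T : Ctx -> Ty -> Type}.
Variable iT : forall G A, T G A -> hom (ictx base G) (ity base A).

Fixpoint isubK {G D} : SubK T G D -> hom (ictx base G) (ictx base D) :=
  match D return SubK T G D -> hom (ictx base G) (ictx base D) with
  | cnil => fun _ => bang CC _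
  | cext D A => fun s => pair CC (isubK (fst s)) (iT _ _ (snd s))
  | clock D => fun s =>
      match s with existT _ G0 (s0, e0) => fmap L (isubK s0) ∘ iext e0 end
  end.

Lemma ivar_lookupK {G D A} (x : Var D A) (s : SubK T G D) :
  ivar base x ∘ isubK s = iT _ _ (lookupK x s).
Proof.
  induction x; simpl.
  - apply pair_p2.
  - assoc_r. rewrite pair_p1. apply IHx.
Qed.

Lemma isubK_wkK (w : forall G A B, T G A -> T (cext G B) A)
  (iT_w : forall G A B (t : T G A), iT _ _ (w G A B t) = iT _ _ t ∘ p1 CC)
  {G D} (B : Ty) (s : SubK T G D) :
  isubK (wkK w B s) = isubK s ∘ p1 CC.
Proof.
  induction D; simpl.
  - symmetry. apply bang_unique.
  - rewrite pair_comp, IHD, iT_w. reflexivity.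
  - destruct s as [G0 [s0 e0]]. simpl. assoc_r. reflexivity.
Qed.

Lemma iext_factor {D G} (e : Ext D G) : forall G' (s : SubK T G' G),
  iext e ∘ isubK s =
  fmap L (isubK (fst (projT2 (factor e s)))) ∘ iext (snd (projT2 (factor e s))).
Proof.
  induction e as [|G A e IHe|G e IHe]; intros G' s; simpl.
  - symmetry. apply etaL_natural.
  - destruct s as [s t]. simpl. assoc_r. rewrite pair_p1. apply IHe.
  - destruct s as [G0 [s0 e0]]. simpl.
    specialize (IHe G0 s0). destruct (factor e s0) as [D' [s' e']]. simpl in *.
    rewrite iext_ext_trans. assoc_r. crewrite <- (fmap_comp _ _ _).
    rewrite IHe, fmap_comp. crewrite (muL_natural _ _). reflexivity.
Qed.

End SubstitutionKit.

Lemma isubK_idRen G : isubK IV (idRen G) = idm _.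
Proof.
  induction G; simpl.
  - symmetry. apply bang_unique.
  - rewrite (isubK_wkK _ (@su) (fun _ _ _ _ => eq_refl)), IHG.
    assoc_r. apply pair_p1_p2.
  - rewrite IHG, fmap_id, comp_id_l. apply iext_lock_nil.
Qed.

Lemma itm_ren {D A} (t : Tm D A) : forall G (r : Ren G D),
  itm base (ren t G r) = itm base t ∘ isubK IV r.
Proof.
  induction t; intros G' r; simpl.
  - symmetry. apply ivar_lookupK.
  - rewrite IHt. simpl isubK.
    rewrite (isubK_wkK _ (@su) (fun _ _ _ _ => eq_refl)).
    symmetry. apply cur_comp.
  - rewrite IHt1, IHt2. assoc_r. rewrite pair_comp. reflexivity.
  - rewrite IHt. cbn [isubK]. rewrite iext_lock_nil, comp_id_r. apply transp_fmap.
  - pose proof (iext_factor IV e _ r) as E. destruct (factor e r) as [D' [r' e']].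
    simpl in *. rewrite IHt, fmap_comp. assoc_r. rewrite E. reflexivity.
Qed.

Lemma itm_wkTm {G A} B (t : Tm G A) : itm base (wkTm B t) = itm base t ∘ p1 CC.
Proof.
  unfold wkTm. rewrite itm_ren, (isubK_wkK _ (@su) (fun _ _ _ _ => eq_refl)).
  rewrite isubK_idRen, comp_id_l. reflexivity.
Qed.

Lemma isubK_idSub G : isubK IT (idSub G) = idm _.
Proof.
  induction G; simpl.
  - symmetry. apply bang_unique.
  - rewrite (isubK_wkK _ (@wkTm) (@itm_wkTm)), IHG.
    assoc_r. apply pair_p1_p2.
  - rewrite IHG, fmap_id, comp_id_l. apply iext_lock_nil.
Qed.

Lemma itm_sub {D A} (t : Tm D A) : forall G (s : Sub G D),
  itm base (sub t G s) = itm base t ∘ isubK IT s.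
Proof.
  induction t; intros G' s; simpl.
  - symmetry. apply ivar_lookupK.
  - rewrite IHt. simpl isubK.
    rewrite (isubK_wkK _ (@wkTm) (@itm_wkTm)).
    symmetry. apply cur_comp.
  - rewrite IHt1, IHt2. assoc_r. rewrite pair_comp. reflexivity.
  - rewrite IHt. cbn [isubK]. rewrite iext_lock_nil, comp_id_r. apply transp_fmap.
  - pose proof (iext_factor IT e _ s) as E. destruct (factor e s) as [D' [s' e']].
    simpl in *. rewrite IHt, fmap_comp. assoc_r. rewrite E. reflexivity.
Qed.

Lemma itm_arr_beta {G A B} (t : Tm (cext G A) B) (u : Tm G A) :
  itm base (app (lam t) u) = itm base (sub t G (idSub G, u)).
Proof.
  rewrite itm_sub. cbn [itm isubK fst snd]. rewrite isubK_idSub. apply ev_pair_cur.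
Qed.

Lemma itm_arr_eta {G A B} (t : Tm G (arr A B)) :
  itm base t = itm base (lam (app (wkTm A t) (var (ze G A)))).
Proof. cbn [itm ivar]. rewrite itm_wkTm. apply cur_unique. reflexivity. Qed.

Lemma itm_box_beta {D G A} (t : Tm (clock D) A) (e : Ext D G) :
  itm base (unbox (box t) e) = itm base (sub t G (lockSub e)).
Proof.
  rewrite itm_sub. unfold lockSub. cbn [itm isubK].
  rewrite isubK_idSub, fmap_id, comp_id_l, comp_assoc.
  f_equal. apply transpK.
Qed.

Lemma itm_box_eta {G A} (t : Tm G (bx A)) :
  itm base t = itm base (box (unbox t (ext_lock ext_nil))).
Proof.
  cbn [itm]. rewrite iext_lock_nil, comp_id_r. symmetry. apply transp_invK.
Qed.

End Soundness.

Theorem proposition2 (M : ModalCCC) (base : ob M) (G : Ctx) (A : Ty)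
  (t u : Tm G A) :
  conv t u -> itm base t = itm base u.
Proof.
  induction 1; try solve [cbn [itm]; congruence].
  - apply itm_arr_beta.
  - apply itm_arr_eta.
  - apply itm_box_beta.
  - apply itm_box_eta.
Qed.
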